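(* Let $m\ge1$, let $D$ be a finite set with $|D|=3m$ whose elements are numbered $1,\dots,3m$, and let $\mathcal{C}=\{c_1,\dots,c_\tau\}$ be a collection of $\tau\ge m$ three-element subsets of $D$. For each $i$, let $g_i\in\mathbb{R}^{3m}$ be given by $(g_i)_j=1$ if element $j$ of $D$ lies in $c_i$ and $(g_i)_j=0$ otherwise. For any integer $l\le m$ and $\mathcal{L}=\{i_1,\dots,i_l\}\subseteq\{1,\dots,\tau\}$, let $G_{\mathcal{L}}=[g_{i_1}\ \cdots\ g_{i_l}]$ and $r=\mathrm{rank}(G_{\mathcal{L}})$. Let $d=[1\ \cdots\ 1]^T\in\mathbb{R}^{3m}$. Suppose $\mathcal{C}$ contains no exact cover of $D$ (a subcollection in which every element of $D$ occurs in exactly one member). Then for every such $\mathcal{L}$ with $|\mathcal{L}|\le m$ there exists an orthogonal matrix $N\in\mathbb{R}^{3m\times3m}$ such that $$\begin{bmatrix} d^T\\ G_{\mathcal{L}}^T\end{bmatrix}N=\begin{bmatrix}\gamma & \beta\\ \mathbf{0} & \tilde G_{\mathcal{L}}^T\end{bmatrix},$$ where $\tilde G_{\mathcal{L}}^T\in\mathbb{R}^{l\times r}$ has full column rank, $\gamma\in\mathbb{R}^{1\times(3m-r)}$ has at least one entry (say $\omega\ge1$ entries) equal to $1$, and $\beta\in\mathbb{R}^{1\times r}$. Furthermore, elementary row operations transform $\begin{bmatrix}\gamma & \beta\\ \mathbf{0} & \tilde G_{\mathcal{L}}^T\end{bmatrix}$ into $\begin{bmatrix}\gamma & \mathbf{0}\\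 \mathbf{0} & \tilde G_{\mathcal{L}}^T\end{bmatrix}$. *)

From HB Require Import structures.
From mathcomp Require Import all_boot all_order all_algebra.
From mathcomp Require Export reals.
Set Implicit Arguments. Unset Strict Implicit. Unset Printing Implicit Defensive.
Import Order.TTheory GRing.Theory Num.Theory.
Local Open Scope ring_scope.

Definition incvec (R : realType) (m tau : nat) (c : 'I_tau -> {set 'I_(3 * m)})
  (i : 'I_tau) : 'cV[R]_(3 * m) :=
  \col_j (if j \in c i then 1 else 0).

Definition GL (R : realType) (m tau : nat) (c : 'I_tau -> {set 'I_(3 * m)})
  (L : {set 'I_tau}) : 'M[R]_(3 * m, #|L|) :=
  \matrix_(j, k) incvec R c (enum_val k) j ord0.

Definition dvec (R : realType) (m : nat) : 'cV[R]_(3 * m) := const_mx 1.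

Definition exact_cover (m tau : nat) (c : 'I_tau -> {set 'I_(3 * m)})
  (S : {set 'I_tau}) : Prop :=
  forall j : 'I_(3 * m), #|[set i in S | j \in c i]| = 1%N.

From HB Require Import structures.
From mathcomp Require Import all_boot all_order all_algebra.
From mathcomp Require Import reals zify.
Set Implicit Arguments. Unset Strict Implicit. Unset Printing Implicit Defensive.
Import Order.TTheory GRing.Theory Num.Theory.
Local Open Scope ring_scope.

(* Counting incidences, the members of L cover at most 3|L| <= 3m = |D| points
   with multiplicity; so if every point were covered, each would be covered
   exactly once and L would be an exact cover.  Hence some point j lies in no
   member of L, i.e. the unit vector e_j is orthogonal to every column of G_L.
   Gram-Schmidt extends e_j to an orthonormal basis of the left kernel of G_L
   (giving N1) and then to one of R^{3m} (adding N2).  The entry of d^T N1 at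
   e_j is 1, G_L^T N1 = 0, and G_L^T N2 has the full column rank r of G_L, so
   beta lies in its row space and is cleared by a block row operation. *)

Lemma sum_card_incidence (T I : finType) (c : I -> {set T}) (L : {set I}) :
  (\sum_j #|[set i in L | j \in c i]| = \sum_(i in L) #|c i|)%N.
Proof.
transitivity (\sum_j \sum_(i in L) (j \in c i : nat))%N.
  apply: eq_bigr => j _; rewrite -sum1_card big_mkcond [RHS]big_mkcond /=.
  by apply: eq_bigr => i _; rewrite inE; case: (i \in L); case: (j \in c i).
rewrite exchange_big; apply: eq_bigr => i _.
by rewrite -sum1_card [RHS]big_mkcond.
Qed.

Lemma cover_multiplicity_eq1 (T I : finType) (c : I -> {set T}) (L : {set I}) :
  (\sum_(i in L) #|c i| <= #|T|)%N -> (forall j, exists2 i, i \in L & j \in c i) ->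
  forall j, #|[set i in L | j \in c i]| = 1%N.
Proof.
move=> sum_le covered.
have ge1 j : (0 < #|[set i in L | j \in c i]|)%N.
  by have [i iL jci] := covered j; apply/card_gt0P; exists i; rewrite inE iL.
have := @leqif_sum T predT (fun j => 1 == #|[set i in L | j \in c i]|) (fun=> 1%N)
  (fun j => #|[set i in L | j \in c i]|) (fun j _ => leqif_eq (ge1 j)).
move/geq_leqif; rewrite sum1_card sum_card_incidence sum_le => /esym /forall_inP eq1 j.
by apply/esym/eqP; apply: eq1.
Qed.

Lemma exists_uncovered m tau (c : 'I_tau -> {set 'I_(3 * m)}) (L : {set 'I_tau}) :
  (forall i, #|c i| = 3%N) -> ~ (exists S, exact_cover c S) -> (#|L| <= m)%N ->
  exists j, forall i, i \in L -> j \notin c i.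
Proof.
move=> hc3 hnoec hL.
have [j /forall_inP uncov | covered] := pickP [pred j | [forall i in L, j \notin c i]].
  by exists j.
exfalso; apply: hnoec; exists L; apply: cover_multiplicity_eq1.
  by rewrite (eq_bigr _ (fun i _ => hc3 i)) sum_nat_const card_ord mulnC leq_mul2l.
move=> j; have /negbT/forall_inPn[i iL] := covered j.
by rewrite negbK; exists i.
Qed.

Section FieldMatrix.
Variable F : fieldType.

Lemma trmx_mul_eq0 m n p (A : 'M[F]_(m, n)) (B : 'M[F]_(p, n)) :
  A *m B^T = 0 -> B *m A^T = 0.
Proof. by move=> AB0; rewrite -[B]trmxK -trmx_mul AB0 trmx0. Qed.

Lemma orthonormal_col_mx k p n (V : 'M[F]_(k, n)) (W : 'M[F]_(p, n)) :
  V *m V^T = 1%:M -> W *m W^T = 1%:M -> V *m W^T = 0 ->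
  col_mx V W *m (col_mx V W)^T = 1%:M.
Proof.
move=> VV WW VW; rewrite tr_col_mx mul_col_row VV WW VW (trmx_mul_eq0 VW).
by rewrite [RHS]scalar_mx_block.
Qed.

Lemma mxrank_orthonormal k n (V : 'M[F]_(k, n)) : V *m V^T = 1%:M -> \rank V = k.
Proof.
move=> VV; apply/eqP; rewrite eqn_leq rank_leq_row /=.
by rewrite -{1}(mxrank1 F k) -VV mxrankM_maxl.
Qed.

Lemma orthonormal_square k n (Q : 'M[F]_(k, n)) :
  k = n -> Q *m Q^T = 1%:M -> Q^T *m Q = 1%:M.
Proof. by move=> ekn; subst k; apply: mulmx1C. Qed.

Lemma mxrank_mul_orthogonal_compl k p n l (A : 'M[F]_(k, n)) (B : 'M[F]_(p, n))
    (G : 'M[F]_(n, l)) :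
  (col_mx A B)^T *m col_mx A B = 1%:M -> A *m G = 0 -> \rank (B *m G) = \rank G.
Proof.
move=> QtQ AG; apply/eqP; rewrite eqn_leq mxrankM_maxr /=.
have -> : \rank (B *m G) = \rank (col_mx A B *m G).
  by rewrite mul_col_mx AG -addsmxE adds0mx.
by rewrite -{1}[G]mul1mx -QtQ -mulmxA mxrankM_maxr.
Qed.

Lemma block_mx_elim_ur p q s t (A : 'M[F]_(p, q)) (B : 'M[F]_(p, t))
    (D : 'M[F]_(s, t)) :
  (B <= D)%MS -> exists E : 'M[F]_(p + s), E \in unitmx /\
    E *m block_mx A B 0 D = block_mx A 0 0 D.
Proof.
case/submxP => X ->; exists (block_mx 1%:M (- X) 0 1%:M); split.
  by rewrite unitmxE det_ublock !det1 mulr1 unitr1.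
by rewrite mulmx_block !mul1mx !mul0mx !mulNmx subrr mulmx0 subr0 !add0r.
Qed.

End FieldMatrix.

Section GramSchmidt.
Variable R : rcfType.

Lemma orthonormal_scale_rV n (w : 'rV[R]_n) : w != 0 ->
  exists a : R, (a *: w) *m (a *: w)^T = 1%:M.
Proof.
move=> w_neq0; set s := \sum_j w 0 j ^+ 2.
have ww : w *m w^T = s%:M.
  by apply/matrixP => i j; rewrite !ord1 !mxE; apply: eq_bigr => l _; rewrite !mxE.
have s_gt0 : 0 < s.
  have [k wk] : exists k, w 0 k != 0.
    apply/existsP; apply: contraNT w_neq0; rewrite negb_exists => /forallP w0.
    by apply/eqP/rowP => j; rewrite mxE; apply/eqP/negPn.
  rewrite /s (bigD1 k) //= ltr_pwDl ?exprn_even_gt0 //.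
  by apply: sumr_ge0 => j _; rewrite sqr_ge0.
exists (Num.sqrt s)^-1; rewrite linearZ /= -scalemxAl -scalemxAr ww !scale_scalar_mx.
by rewrite mulrCA mulrA -expr2 exprVn sqr_sqrtr ?ltW // mulVf // gt_eqF.
Qed.

Lemma orthonormal_ext_rV p k n (S : 'M[R]_(p, n)) (V : 'M[R]_(k, n)) :
  V *m V^T = 1%:M -> (k < \rank S)%N ->
  exists v : 'rV[R]_n, [/\ v *m v^T = 1%:M, v *m V^T = 0 & (v <= S)%MS].
Proof.
move=> VV k_lt.
have k_le : (k <= n)%N by rewrite -(mxrank_orthonormal VV) rank_leq_col.
have cap_gt0 : (0 < \rank (S :&: kermx V^T)%MS)%N.
  have := mxrank_sum_cap S (kermx V^T); have := rank_leq_col (S + kermx V^T)%MS.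
  rewrite mxrank_ker mxrank_tr (mxrank_orthonormal VV); lia.
set w := nz_row (S :&: kermx V^T)%MS.
have w_neq0 : w != 0 by rewrite nz_row_eq0 -mxrank_eq0 -lt0n.
have /andP[wS wK] : (w <= S)%MS && (w <= kermx V^T)%MS by rewrite -sub_capmx nz_row_sub.
have [a ww] := orthonormal_scale_rV w_neq0.
exists (a *: w); split => //; last exact: scalemx_sub.
by move: wK; rewrite -scalemxAl sub_kermx => /eqP ->; rewrite scaler0.
Qed.

Lemma orthonormal_ext p n (S : 'M[R]_(p, n)) d k (V : 'M[R]_(k, n)) :
  V *m V^T = 1%:M -> (V <= S)%MS -> (k + d <= \rank S)%N ->
  exists W : 'M[R]_(d, n), [/\ W *m W^T = 1%:M, V *m W^T = 0 & (W <= S)%MS].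
Proof.
elim: d k V => [|d IH] k V VV VS kd_le.
  by exists 0; split; [apply/matrixP => -[] | rewrite trmx0 mulmx0 | apply: sub0mx].
have k_lt : (k < \rank S)%N by apply: leq_trans kd_le; rewrite addnS ltnS leq_addr.
have [v [vv vV vS]] := orthonormal_ext_rV VV k_lt.
have VvVv := orthonormal_col_mx VV vv (trmx_mul_eq0 vV).
have VvS : (col_mx V v <= S)%MS by rewrite col_mx_sub VS vS.
have [W' [W'W' VvW' W'S]] := IH _ _ VvVv VvS ltac:(by rewrite addn1 addSnnS).
move: VvW'; rewrite mul_col_mx => /eqP; rewrite col_mx_eq0 => /andP[/eqP VW' /eqP vW'].
have VW : V *m (col_mx v W')^T = 0.
  by rewrite tr_col_mx mul_mx_row (trmx_mul_eq0 vV) VW' row_mx0.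
have vW'S : (col_mx v W' <= S)%MS by rewrite col_mx_sub vS W'S.
by exists (col_mx v W'); split; [exact: (orthonormal_col_mx vv W'W' vW') | |].
Qed.

Lemma orthonormal_basis_through_ker n l (G : 'M[R]_(n, l)) (e : 'rV[R]_n) s :
  (1 + s + \rank G = n)%N -> e *m e^T = 1%:M -> e *m G = 0 ->
  exists (W : 'M[R]_(s, n)) (B : 'M[R]_(\rank G, n)),
    let Q := col_mx (col_mx e W) B in
    [/\ Q *m Q^T = 1%:M, Q^T *m Q = 1%:M & col_mx e W *m G = 0].
Proof.
move=> sz ee eG.
have eK : (e <= kermx G)%MS by rewrite sub_kermx eG.
have [W [WW eW WK]] := orthonormal_ext (d := s) ee eK ltac:(by rewrite mxrank_ker; lia).
have AA := orthonormal_col_mx ee WW eW.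
have AG : col_mx e W *m G = 0.
  by move: WK; rewrite sub_kermx mul_col_mx eG => /eqP ->; rewrite col_mx0.
have [B [BB AB _]] := orthonormal_ext (d := \rank G) AA (submx1 _)
  ltac:(by rewrite mxrank1 sz).
have QQ := orthonormal_col_mx AA BB AB.
by exists W, B; split => //; apply: orthonormal_square QQ.
Qed.

End GramSchmidt.

Theorem lemma5 (R : realType) (m tau : nat) (c : 'I_tau -> {set 'I_(3 * m)})
  (hm : (1 <= m)%N) (htau : (m <= tau)%N)
  (hc3 : forall i, #|c i| = 3%N)
  (hnoec : ~ exists S : {set 'I_tau}, exact_cover c S)
  (L : {set 'I_tau}) (hL : (#|L| <= m)%N) :
  let G := GL R c L in
  let r := \rank G in
  exists (N1 : 'M[R]_(3 * m, 3 * m - r)) (N2 : 'M[R]_(3 * m, r))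
         (gamma : 'M[R]_(1, 3 * m - r)) (beta : 'M[R]_(1, r))
         (Gt : 'M[R]_(#|L|, r)),
    (* N = [N1 N2] is an orthogonal matrix *)
    (row_mx N1 N2)^T *m row_mx N1 N2 = 1%:M /\
    row_mx N1 N2 *m (row_mx N1 N2)^T = 1%:M /\
    col_mx (dvec R m)^T G^T *m row_mx N1 N2 = block_mx gamma beta 0 Gt /\
    \rank Gt = r /\
    (exists j, gamma ord0 j = 1) /\
    exists E : 'M[R]_(1 + #|L|), E \in unitmx /\
      E *m block_mx gamma beta 0 Gt = block_mx gamma 0 0 Gt.
Proof.
move=> G r.
have [j uncov] := exists_uncovered hc3 hnoec hL.
set e : 'rV[R]_(3 * m) := delta_mx 0 j.
have ee : e *m e^T = 1%:M.
  by rewrite trmx_delta mul_delta_mx; apply/matrixP => a b; rewrite !ord1 !mxE.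
have eG : e *m G = 0.
  by rewrite -rowE; apply/rowP => k; rewrite !mxE (negbTE (uncov _ (enum_valP k))).
have r_le : (r <= #|L|)%N by apply: rank_leq_col.
have [s sz] : exists s, (1 + s + r = 3 * m)%N by exists (3 * m - r - 1)%N; lia.
have -> : (3 * m - r = 1 + s)%N by lia.
have [W [B [QQ QtQ AG]]] := orthonormal_basis_through_ker sz ee eG.
set A := col_mx e W in QQ QtQ AG *.
have rGt : \rank (G^T *m B^T) = r.
  by rewrite -trmx_mul mxrank_tr (mxrank_mul_orthogonal_compl QtQ AG).
have Gt_full : row_full (G^T *m B^T) by rewrite /row_full rGt.
have [E [Eu EGt]] := block_mx_elim_ur ((dvec R m)^T *m A^T)
  (submx_full ((dvec R m)^T *m B^T) Gt_full).
exists A^T, B^T, ((dvec R m)^T *m A^T), ((dvec R m)^T *m B^T), (G^T *m B^T).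
have GA : G^T *m A^T = 0 by rewrite -trmx_mul AG trmx0.
rewrite mul_col_row GA -tr_col_mx trmxK.
split=> //; split=> //; split=> //; split=> //; split; last by exists E.
exists (lshift s 0).
by rewrite tr_col_mx mul_mx_row row_mxEl trmx_delta -colE !mxE.
Qed.
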